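(* Let $F$ be a group and $K,M$ normal subgroups of $F$ with $K\geqslant M$. Assume that (1) $\mathrm{H}^2(F)=0$; (2) $F/M$ is boundedly $3$-acyclic; and (3) $K/M$ is boundedly $2$-acyclic. Then $\mathcal{W}(F,K,M)=0$ and $\mathrm{H}^1(M)^F\cap i^*\mathrm{Q}(K)^F=i^*\mathrm{H}^1(K)^F$, where $i\colon M\hookrightarrow K$ is the inclusion.
   Context: Cohomology has trivial real coefficients. A group $\Lambda$ is boundedly $n$-acyclic if its bounded cohomology $\mathrm{H}^k_b(\Lambda)$ vanishes for $1\le k\le n$. $\mathrm{Q}(K)^F$: homogeneous quasimorphisms on $K$ invariant under conjugation by $F$; $\mathrm{H}^1(M)^F$, $\mathrm{H}^1(K)^F$: $F$-invariant homomorphisms to $\mathbb{R}$; $i^*$ is restriction to $M$; $\mathcal{W}(F,K,M)=\mathrm{Q}(M)^F/(\mathrm{H}^1(M)^F+i^*\mathrm{Q}(K)^F)$. *)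

From HB Require Import structures.
From mathcomp Require Import all_boot all_order all_algebra.
From Stdlib Require Rdefinitions.
From mathcomp Require Import Rstruct.
Notation R := Rdefinitions.R.
Set Implicit Arguments. Unset Strict Implicit. Unset Printing Implicit Defensive.
Import Order.TTheory GRing.Theory Num.Theory.
Local Open Scope ring_scope.

Record Grp := {
  gcar :> Type;
  gmul : gcar -> gcar -> gcar;
  ginv : gcar -> gcar;
  gone : gcar;
  gmulA : forall x y z, gmul x (gmul y z) = gmul (gmul x y) z;
  gmul1 : forall x, gmul gone x = x;
  gmulV : forall x, gmul (ginv x) x = gone
}.

Section Groups.
Variable G : Grp.
Local Notation "x ** y" := (gmul x y) (at level 40, left associativity).

Definition is_subgroup (H : G -> Prop) : Prop :=
  [/\ H (gone G), (forall x y, H x -> H y -> H (x ** y)) & (forall x, H x -> H (ginv x))].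

Definition is_normal (H : G -> Prop) : Prop :=
  is_subgroup H /\ forall g x, H x -> H (g ** x ** ginv g).

Definition gpown (x : G) (n : nat) : G := iter n (gmul x) (gone G).
Definition gpow (x : G) (n : int) : G :=
  match n with Posz k => gpown x k | Negz k => ginv (gpown x k.+1) end.

(* Homogeneous standard cochain complex of G with trivial real coefficients:
   a k-cochain is a function G^(k+1) -> R, cochains are required to be
   G-invariant (diagonal left action). *)
Definition cochain (k : nat) := ('I_k.+1 -> G) -> R.

Definition face k (i : 'I_k.+2) (x : 'I_k.+2 -> G) : 'I_k.+1 -> G :=
  fun j => x (lift i j).

Definition cobound k (f : cochain k) : cochain k.+1 :=
  fun x => \sum_(i < k.+2) (-1) ^+ i * f (face i x).

Definition invariant k (f : cochain k) : Prop :=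
  forall g x, f (fun j => g ** x j) = f x.

Definition bounded k (f : cochain k) : Prop :=
  exists C : R, forall x, `|f x| <= C.

(* H^(n+1)(G; R) = 0 *)
Definition H_vanishes (n : nat) : Prop :=
  forall f : cochain n.+1, invariant f -> (forall x, cobound f x = 0) ->
  exists h : cochain n, invariant h /\ forall x, f x = cobound h x.

(* H_b^(n+1)(G; R) = 0 *)
Definition Hb_vanishes (n : nat) : Prop :=
  forall f : cochain n.+1, invariant f -> bounded f ->
  (forall x, cobound f x = 0) ->
  exists h : cochain n, invariant h /\ bounded h /\ forall x, f x = cobound h x.

(* boundedly n-acyclic: H_b^k(G) = 0 for 1 <= k <= n *)
Definition bdd_acyclic (n : nat) : Prop :=
  forall k : nat, (k < n)%N -> Hb_vanishes k.

(* Real-valued functions on a subgroup H of G are represented by functions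
   G -> R, only the values on H mattering. *)
Definition quasimorphism_on (H : G -> Prop) (f : G -> R) : Prop :=
  exists D : R, forall x y, H x -> H y -> `|f (x ** y) - f x - f y| <= D.

Definition homogeneous_on (H : G -> Prop) (f : G -> R) : Prop :=
  forall x (n : int), H x -> f (gpow x n) = n%:~R * f x.

Definition homomorphism_on (H : G -> Prop) (f : G -> R) : Prop :=
  forall x y, H x -> H y -> f (x ** y) = f x + f y.

Definition conj_invariant_on (H : G -> Prop) (f : G -> R) : Prop :=
  forall g x, H x -> f (g ** x ** ginv g) = f x.

Definition QInv (H : G -> Prop) (f : G -> R) : Prop :=
  [/\ quasimorphism_on H f, homogeneous_on H f & conj_invariant_on H f].

Definition H1Inv (H : G -> Prop) (f : G -> R) : Prop :=
  homomorphism_on H f /\ conj_invariant_on H f.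

(* W(G,K,M) = Q(M)^G / (H^1(M)^G + i^* Q(K)^G) vanishes *)
Definition W_trivial (K M : G -> Prop) : Prop :=
  forall phi, QInv M phi ->
  exists h psi, [/\ H1Inv M h, QInv K psi & forall x, M x -> phi x = h x + psi x].

End Groups.

(* Q together with pi is (a copy of) the quotient group G/N:
   pi is a surjective homomorphism G -> Q with kernel N. *)
Definition is_quotient (G Q : Grp) (N : G -> Prop) (pi : G -> Q) : Prop :=
  [/\ forall x y, pi (gmul x y) = gmul (pi x) (pi y),
      forall q, exists x, pi x = q
    & forall x, pi x = gone Q <-> N x].

(* Q together with pi is (a copy of) the quotient group H/N, for N <= H <= G:
   pi restricted to H is a surjective homomorphism H -> Q with kernel N. *)
Definition is_quotient_in (G Q : Grp) (H N : G -> Prop) (pi : G -> Q) : Prop :=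
  [/\ forall x y, H x -> H y -> pi (gmul x y) = gmul (pi x) (pi y),
      forall q, exists x, H x /\ pi x = q
    & forall x, H x -> (pi x = gone Q <-> N x)].

From Pilot Require Import Defs.
From mathcomp Require Import all_boot all_order all_algebra.
From mathcomp Require Import Rstruct.
From mathcomp Require Import ring lra.
From Stdlib Require Import FunctionalExtensionality ClassicalEpsilon.
From Stdlib Require Raxioms.
Set Implicit Arguments. Unset Strict Implicit. Unset Printing Implicit Defensive.
Import Order.TTheory GRing.Theory Num.Theory.
Local Open Scope ring_scope.
Local Notation "x ** y" := (gmul x y) (at level 40, left associativity).

(* Choose a section s of F -> F/M with s 1 = 1 and extend phi to F by
   phi_ext x = phi (x s(pi x)^-1). The defect of phi_ext is, up to a bounded error,
   minus the pullback of the 2-cochain A(a, b) = phi (s a s b s(a b)^-1) on F/M.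
   Hence dA is a bounded 3-cocycle on F/M; as H_b^3(F/M) = 0 it equals dB with B
   bounded, and d(phi_ext) + pi^*(A - B) is a bounded 2-cocycle on F. Since
   H^2(F) = 0 it is the coboundary of some Psi : F -> R, a quasimorphism whose
   defect on M is that of phi up to a constant. The homogenization of Psi then
   differs from phi on M by an F-invariant homomorphism, so W(F, K, M) = 0.
   For the second claim, a quasimorphism psi in Q(K)^F that is a homomorphism on M
   satisfies psi(k m) = psi k + psi m, so its defect descends to a bounded
   2-cocycle on K/M. As H_b^2(K/M) = 0, that defect is the defect of a bounded
   function on K/M, which is forced to vanish by homogeneity of psi. *)

Section GroupFacts.
Variable G : Grp.
Implicit Types x y g : G.

Lemma mulgV x : x ** ginv x = gone G.
Proof.
have e : ginv (ginv x) ** ((ginv x ** x) ** ginv x) = gone G.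
  by rewrite gmulV gmul1 gmulV.
by rewrite -gmulA gmulA gmulV gmul1 in e.
Qed.

Lemma mulg1 x : x ** gone G = x.
Proof. by rewrite -(gmulV x) gmulA mulgV gmul1. Qed.

Lemma mulKg x y : ginv x ** (x ** y) = y.
Proof. by rewrite gmulA gmulV gmul1. Qed.

Lemma mulKVg x y : x ** (ginv x ** y) = y.
Proof. by rewrite gmulA mulgV gmul1. Qed.

Lemma invg_unique x y : x ** y = gone G -> y = ginv x.
Proof. by move=> e; rewrite -(mulKg x y) e mulg1. Qed.

Lemma invgK x : ginv (ginv x) = x.
Proof. by symmetry; apply: invg_unique; rewrite gmulV. Qed.

Lemma invg1 : ginv (gone G) = gone G.
Proof. by symmetry; apply: invg_unique; rewrite gmul1. Qed.

Lemma invMg x y : ginv (x ** y) = ginv y ** ginv x.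
Proof. by symmetry; apply: invg_unique; rewrite -gmulA mulKVg mulgV. Qed.

Lemma gpownS x n : gpown x n.+1 = x ** gpown x n.
Proof. by []. Qed.

Lemma gpown1 x : gpown x 1 = x.
Proof. by rewrite gpownS mulg1. Qed.

Lemma gpownD x m n : gpown x (m + n) = gpown x m ** gpown x n.
Proof.
elim: m => [|m IH]; first by rewrite add0n gmul1.
by rewrite addSn !gpownS IH gmulA.
Qed.

Lemma gpownSr x n : gpown x n.+1 = gpown x n ** x.
Proof. by rewrite -addn1 gpownD gpown1. Qed.

Lemma gpownM x m n : gpown x (m * n) = gpown (gpown x m) n.
Proof.
elim: n => [|n IH]; first by rewrite muln0.
by rewrite mulnS gpownD IH gpownS.
Qed.

Lemma gpown1g n : gpown (gone G) n = gone G.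
Proof. by elim: n => // n IH; rewrite gpownS IH gmul1. Qed.

Lemma gpownV x n : gpown (ginv x) n = ginv (gpown x n).
Proof.
elim: n => [|n IH]; first by rewrite invg1.
by rewrite gpownS IH gpownSr invMg.
Qed.

Lemma gpownJ g x n : gpown (g ** x ** ginv g) n = g ** gpown x n ** ginv g.
Proof.
elim: n => [|n IH]; first by rewrite /= mulg1 mulgV.
by rewrite gpownS IH gpownS -!gmulA mulKg.
Qed.

Lemma subgroup_gpown (H : G -> Prop) x n : is_subgroup H -> H x -> H (gpown x n).
Proof.
by case=> H1 HM _ Hx; elim: n => [|n IH] //; rewrite gpownS; exact: HM.
Qed.

End GroupFacts.

Lemma morph_in1 (G Q : Grp) (H : G -> Prop) (pi : G -> Q) :
  is_subgroup H -> (forall x y, H x -> H y -> pi (x ** y) = pi x ** pi y) ->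
  pi (gone G) = gone Q.
Proof.
case=> H1 _ _ pimul; have e := pimul _ _ H1 H1; rewrite gmul1 in e.
by rewrite -(mulKg (pi (gone G)) (pi (gone G))) -e gmulV.
Qed.

Lemma morph_inV (G Q : Grp) (H : G -> Prop) (pi : G -> Q) :
  is_subgroup H -> (forall x y, H x -> H y -> pi (x ** y) = pi x ** pi y) ->
  forall x, H x -> pi (ginv x) = ginv (pi x).
Proof.
move=> hH pimul x Hx; have [_ _ HV] := hH.
by apply: invg_unique; rewrite -pimul ?mulgV ?(morph_in1 hH pimul) //; exact: HV.
Qed.

Lemma normal_conjV (G : Grp) (N : G -> Prop) g x :
  is_normal N -> N x -> N (ginv g ** x ** g).
Proof. by move=> [_ Nn] Nx; rewrite -{2}(invgK g); exact: Nn. Qed.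

Lemma subgroupT (G : Grp) : is_subgroup (fun _ : G => True).
Proof. by []. Qed.

Lemma morph1 (G Q : Grp) (pi : G -> Q) :
  (forall x y, pi (x ** y) = pi x ** pi y) -> pi (gone G) = gone Q.
Proof. by move=> pimul; apply: (morph_in1 (subgroupT G)) => x y _ _. Qed.

Lemma morphV (G Q : Grp) (pi : G -> Q) :
  (forall x y, pi (x ** y) = pi x ** pi y) -> forall x, pi (ginv x) = ginv (pi x).
Proof. by move=> pimul x; apply: (morph_inV (subgroupT G)) => // y z _ _. Qed.

Lemma normalized_section (A B : Type) (f : A -> B) (a0 : A) :
  (forall b, exists a, f a = b) ->
  exists s : B -> A, (forall b, f (s b) = b) /\ s (f a0) = a0.
Proof.
move=> fsurj; have [s0 hs0] := choice _ fsurj.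
exists (fun b => if excluded_middle_informative (b = f a0) then a0 else s0 b).
by split=> [b|]; case: excluded_middle_informative => //= [->].
Qed.

Section Cochains.
Variable G : Grp.
Implicit Types (a b c d g : G) (l : seq G).

Definition pt {n} l : 'I_n -> G := fun j => nth (gone G) l j.

Lemma pt_eta n (y : 'I_n.+1 -> G) : y = pt (mkseq (fun i => y (inord i)) n.+1).
Proof. by apply: functional_extensionality => j; rewrite /pt nth_mkseq // inord_val. Qed.

Lemma pt_mul g n l : size l = n ->
  (fun j : 'I_n => g ** pt l j) = pt (map (gmul g) l).
Proof.
by move=> sz; apply: functional_extensionality => j; rewrite /pt (nth_map (gone G)) // sz.
Qed.

Lemma face_pt k (i : 'I_k.+2) l :
  face i (pt l) = pt (mkseq (fun j => nth (gone G) l (bump i j)) k.+1).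
Proof. by apply: functional_extensionality => j; rewrite /face /pt nth_mkseq. Qed.

Lemma cobound_pt1 (f : cochain G 1) a b c :
  cobound f (pt [:: a; b; c]) = f (pt [:: b; c]) - f (pt [:: a; c]) + f (pt [:: a; b]).
Proof. by rewrite /cobound !big_ord_recl big_ord0 !face_pt /=; ring. Qed.

Lemma cobound_pt2 (f : cochain G 2) a b c d :
  cobound f (pt [:: a; b; c; d]) = f (pt [:: b; c; d]) - f (pt [:: a; c; d])
     + f (pt [:: a; b; d]) - f (pt [:: a; b; c]).
Proof. by rewrite /cobound !big_ord_recl big_ord0 !face_pt /=; ring. Qed.

Lemma cobound_cobound1 (f : cochain G 1) y : cobound (cobound f) y = 0.
Proof. by rewrite (pt_eta y) /= cobound_pt2 !cobound_pt1; ring. Qed.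

Lemma cobound_cobound2 (f : cochain G 2) y : cobound (cobound f) y = 0.
Proof.
by rewrite (pt_eta y) /cobound !big_ord_recl !big_ord0 !face_pt /=; ring.
Qed.

Lemma coboundD k (f f' : cochain G k) y :
  cobound (fun z => f z + f' z) y = cobound f y + cobound f' y.
Proof. by rewrite /cobound -big_split; apply: eq_bigr => i _; rewrite mulrDr. Qed.

Lemma coboundB k (f f' : cochain G k) y :
  cobound (fun z => f z - f' z) y = cobound f y - cobound f' y.
Proof. by rewrite /cobound -sumrB; apply: eq_bigr => i _; rewrite mulrBr. Qed.

Lemma invariant_cobound k (f : cochain G k) :
  Defs.invariant f -> Defs.invariant (cobound f).
Proof.
by move=> hf g y; apply: eq_bigr => i _; congr (_ * _); exact: (hf g (face i y)).
Qed.

Lemma bounded_cobound k (f : cochain G k) : bounded f -> bounded (cobound f).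
Proof.
case=> C hC; exists (k.+2%:R * C) => y.
apply: le_trans (ler_norm_sum _ _ _) _.
have -> : k.+2%:R * C = \sum_(i < k.+2) C by rewrite sumr_const card_ord mulr_natl.
by apply: ler_sum => i _; rewrite normrM normrX normrN1 expr1n mul1r.
Qed.

Lemma invariant_pt2 (h : cochain G 1) a b :
  Defs.invariant h -> h (pt [:: a; b]) = h (pt [:: gone G; ginv a ** b]).
Proof. by move=> hh; rewrite -(hh (ginv a)) (@pt_mul _ 2) //= gmulV. Qed.

Definition defect (f : G -> R) a b := f a + f b - f (a ** b).

Lemma normr_defect (f : G -> R) a b : `|f (a ** b) - f a - f b| = `|defect f a b|.
Proof. by rewrite -normrN /defect; congr `|_|; ring. Qed.

Definition inhom_cocycle (w : G -> G -> R) :=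
  forall a b c, w a b + w (a ** b) c = w a (b ** c) + w b c.

Lemma defect_inhom_cocycle (f : G -> R) : inhom_cocycle (defect f).
Proof. by move=> a b c; rewrite /defect gmulA; ring. Qed.

Lemma cobound_invariant1_defect (h : cochain G 1) a b : Defs.invariant h ->
  cobound h (pt [:: gone G; a; a ** b]) = defect (fun x => h (pt [:: gone G; x])) a b.
Proof.
by move=> hh; rewrite cobound_pt1 (invariant_pt2 _ _ hh) mulKg /defect; ring.
Qed.

Definition homog1 (u : G -> R) : cochain G 1 :=
  fun y => u (ginv (y ord0) ** y ord_max).

Definition homog2 (w : G -> G -> R) : cochain G 2 :=
  fun y => w (ginv (y ord0) ** y (inord 1)) (ginv (y (inord 1)) ** y ord_max).

Lemma homog2_pt (w : G -> G -> R) a b c :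
  homog2 w (pt [:: a; b; c]) = w (ginv a ** b) (ginv b ** c).
Proof. by rewrite /homog2 /pt inordK. Qed.

Lemma invariant_homog1 (u : G -> R) : Defs.invariant (homog1 u).
Proof. by move=> g y; rewrite /homog1 invMg -gmulA mulKg. Qed.

Lemma invariant_homog2 (w : G -> G -> R) : Defs.invariant (homog2 w).
Proof. by move=> g y; rewrite /homog2 !invMg -!gmulA !mulKg. Qed.

Lemma mul_inv_chain a b c : (ginv a ** b) ** (ginv b ** c) = ginv a ** c.
Proof. by rewrite -gmulA mulKVg. Qed.

Lemma cobound_homog1 (u : G -> R) a b c :
  cobound (homog1 u) (pt [:: a; b; c]) = defect u (ginv a ** b) (ginv b ** c).
Proof. by rewrite cobound_pt1 /homog1 /defect /= mul_inv_chain; ring. Qed.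

Lemma cobound_homog2 (w : G -> G -> R) y :
  inhom_cocycle w -> cobound (homog2 w) y = 0.
Proof.
move=> hw; rewrite (pt_eta y) /= cobound_pt2 !homog2_pt.
set a := y (inord 0); set b := y (inord 1); set c := y (inord 2); set d := y (inord 3).
by have := hw (ginv a ** b) (ginv b ** c) (ginv c ** d); rewrite !mul_inv_chain; lra.
Qed.
End Cochains.
Arguments pt {G n} l _.

Section Pullback.
Variables (G Q : Grp) (pi : G -> Q).

Definition pullback k (f : cochain Q k) : cochain G k := fun y => f (fun j => pi (y j)).

Lemma cobound_pullback k (f : cochain Q k) : cobound (pullback f) = pullback (cobound f).
Proof. by []. Qed.

Lemma pullback_pt k (f : cochain Q k) (l : seq G) : pi (gone G) = gone Q ->
  pullback f (pt l) = f (pt (map pi l)).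
Proof.
move=> pi1; congr f; apply: functional_extensionality => j; rewrite /pt.
case: (ltnP j (size l)) => hj; first by rewrite (nth_map (gone G)).
by rewrite !nth_default ?size_map.
Qed.

Hypothesis pimul : forall x y, pi (x ** y) = pi x ** pi y.

Lemma invariant_pullback k (f : cochain Q k) :
  Defs.invariant f -> Defs.invariant (pullback f).
Proof.
move=> hf g y; rewrite /pullback -[RHS](hf (pi g)); congr f.
by apply: functional_extensionality => j; rewrite pimul.
Qed.

Lemma pullback_homog2 (w : Q -> Q -> R) :
  pullback (homog2 w) = homog2 (fun x y => w (pi x) (pi y)).
Proof.
apply: functional_extensionality => y.
by rewrite /homog2 /pullback !pimul !(morphV pimul).
Qed.

Lemma bounded_of_pullback k (f : cochain Q k) :
  (forall q, exists x, pi x = q) -> bounded (pullback f) -> bounded f.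
Proof.
move=> pisurj [C hC]; have [s pi_s] := choice _ pisurj.
exists C => y; have -> : y = fun j => pi (s (y j)).
  by apply: functional_extensionality => j; rewrite pi_s.
exact: hC.
Qed.
End Pullback.

Lemma eq0_of_bounded_multiples (r C : R) : (forall n : nat, n.+1%:R * `|r| <= C) -> r = 0.
Proof.
move=> h; apply/eqP; apply/negPn/negP => hr.
have hr0 : 0 < `|r| by rewrite normr_gt0.
have h0 := h 0%N; rewrite mul1r in h0.
have hC : 0 <= C / `|r| by apply: divr_ge0 => //; apply: le_trans h0.
have := archi_boundP hC; set n := Num.Def.archi_bound _ => hn.
have := h n.
have : n%:R * `|r| <= n.+1%:R * `|r|.
  by apply: ler_wpM2r; [exact: ltW | rewrite ler_nat].
move: hn; rewrite ltr_pdivrMr // => hn.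
lra.
Qed.

Section Homomorphisms.
Variables (G : Grp) (H : G -> Prop).
Hypothesis hH : is_subgroup H.
Implicit Type f : G -> R.

Lemma homogeneous_on_of_gpown f :
  (forall x n, H x -> f (gpown x n) = n%:R * f x) ->
  (forall x, H x -> f (ginv x) = - f x) -> homogeneous_on H f.
Proof.
move=> fpow finv x [n|n] Hx; first exact: fpow.
rewrite /gpow finv; last exact: subgroup_gpown hH Hx.
by rewrite fpow // NegzE mulrNz mulNr.
Qed.

Lemma homogeneous_gpown f x n : homogeneous_on H f -> H x -> f (gpown x n) = n%:R * f x.
Proof. by move=> hf; exact: (hf x (Posz n)). Qed.

Lemma hom_on1 f : homomorphism_on H f -> f (gone G) = 0.
Proof.
have [H1 _ _] := hH; move=> hf; have := hf _ _ H1 H1; rewrite gmul1 => e.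
by apply: (@addrI _ (f (gone G))); rewrite addr0 -e.
Qed.

Lemma hom_on_gpown f x n : homomorphism_on H f -> H x -> f (gpown x n) = n%:R * f x.
Proof.
move=> hf Hx; elim: n => [|n IH]; first by rewrite mul0r (hom_on1 hf).
by rewrite gpownS hf ?IH ?mulrS ?mulrDl ?mul1r //; exact: subgroup_gpown.
Qed.

Lemma hom_onV f x : homomorphism_on H f -> H x -> f (ginv x) = - f x.
Proof.
have [_ _ HV] := hH; move=> hf Hx; have := hf _ _ (HV _ Hx) Hx.
by rewrite gmulV (hom_on1 hf) => e; apply/eqP; rewrite -addr_eq0 e.
Qed.

Lemma H1Inv_QInv f : H1Inv H f -> QInv H f.
Proof.
case=> hf fconj; split=> //.
  by exists 0 => x y Hx Hy; rewrite hf // (_ : _ - _ - _ = 0) ?normr0 //; ring.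
by apply: homogeneous_on_of_gpown => x *; [exact: hom_on_gpown | exact: hom_onV].
Qed.

Lemma homomorphism_on_eq f g :
  (forall x, H x -> f x = g x) -> homomorphism_on H g -> homomorphism_on H f.
Proof. by have [_ HM _] := hH; move=> fg hg x y Hx Hy; rewrite !fg ?hg //; exact: HM. Qed.
End Homomorphisms.

Lemma H1Inv_eq_on (G : Grp) (N : G -> Prop) (f g : G -> R) : is_normal N ->
  (forall x, N x -> f x = g x) -> H1Inv N g -> H1Inv N f.
Proof.
move=> [hN Nconj] fg [hg gconj]; split; first exact: homomorphism_on_eq hg.
by move=> y x Nx; rewrite !fg ?gconj //; exact: Nconj.
Qed.

Lemma H1Inv_sub (G : Grp) (K M : G -> Prop) (h : G -> R) :
  (forall x, M x -> K x) -> H1Inv K h -> H1Inv M h.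
Proof.
by move=> MK [hh hconj]; split=> [x y Mx My | g x Mx]; [apply: hh | apply: hconj]; auto.
Qed.

Section Homogenization.
Variables (G : Grp) (psi : G -> R) (D : R).
Hypothesis psi_defect : forall a b, `|defect psi a b| <= D.

Lemma defect_gpown x n : `|psi (gpown x n.+1) - n.+1%:R * psi x| <= n%:R * D.
Proof.
elim: n => [|n IH]; first by rewrite gpown1 mul1r subrr normr0 mul0r.
have := psi_defect x (gpown x n.+1); rewrite /defect -gpownS.
move/ler_normlP => [h1 h2]; move/ler_normlP: IH => [h3 h4].
apply/ler_normlP; rewrite [n.+2%:R]mulrS [n.+1%:R]mulrS in h3 h4 *; split; lra.
Qed.

(* The lower estimates (psi(x^n) - D)/n of the homogenization at x never exceed
   the upper estimates (psi(x^m) + D)/m; the supremum of the former will do. *)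
Lemma homogenization_at x :
  exists L : R, forall n, `|n.+1%:R * L - psi (gpown x n.+1)| <= D.
Proof.
have D_ge0 : 0 <= D := le_trans (normr_ge0 _) (psi_defect x x).
pose u n := psi (gpown x n).
have squeeze n m : (u n.+1 - D) / n.+1%:R <= (u m.+1 + D) / m.+1%:R.
  have := defect_gpown (gpown x n.+1) m; have := defect_gpown (gpown x m.+1) n.
  rewrite -!gpownM mulnC => /ler_normlP[a1 a2] /ler_normlP[b1 b2].
  rewrite ler_pdivrMr ?ltr0Sn // mulrAC ler_pdivlMr ?ltr0Sn // /u.
  rewrite [n.+1%:R]mulrS [m.+1%:R]mulrS in a1 a2 b1 b2 *.
  nra.
pose E r := exists n, r = (u n.+1 - D) / n.+1%:R.
have E_bounded : Raxioms.bound E.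
  by exists ((u 1%N + D) / 1%:R) => r [n ->]; apply/RleP; exact: squeeze.
have E_inhabited : exists r, E r by exists ((u 1%N - D) / 1%:R), 0%N.
have [L [L_ub L_lub]] := Raxioms.completeness E E_bounded E_inhabited.
exists L => n.
have h1 : (u n.+1 - D) / n.+1%:R <= L by apply/RleP; apply: L_ub; exists n.
have h2 : L <= (u n.+1 + D) / n.+1%:R.
  by apply/RleP; apply: L_lub => r [m ->]; apply/RleP; exact: squeeze.
rewrite ler_pdivrMr ?ltr0Sn // in h1; rewrite ler_pdivlMr ?ltr0Sn // in h2.
by apply/ler_normlP; split; rewrite /u in h1 h2; lra.
Qed.

Definition homogenization_of (Ph : G -> R) :=
  forall x n, `|n.+1%:R * Ph x - psi (gpown x n.+1)| <= D.

Lemma exists_homogenization : exists Ph, homogenization_of Ph.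
Proof. exact: choice _ homogenization_at. Qed.

Variable Ph : G -> R.
Hypothesis hPh : homogenization_of Ph.

Lemma homogenization_eq x c C :
  (forall n, `|n.+1%:R * c - psi (gpown x n.+1)| <= C) -> Ph x = c.
Proof.
move=> hc; apply/eqP; rewrite -subr_eq0; apply/eqP.
apply: (@eq0_of_bounded_multiples _ (D + C)) => n.
rewrite -normr_nat -normrM mulrBr.
have -> : n.+1%:R * Ph x - n.+1%:R * c =
   (n.+1%:R * Ph x - psi (gpown x n.+1)) - (n.+1%:R * c - psi (gpown x n.+1)) by ring.
exact: le_trans (ler_normB _ _) (lerD (hPh x n) (hc n)).
Qed.

Lemma homogenization_gpown x k : Ph (gpown x k) = k%:R * Ph x.
Proof.
apply: (homogenization_eq (C := D)) => n; case: k => [|k].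
  rewrite mul0r mulr0 sub0r normrN gpown1g.
  by have := psi_defect (gone G) (gone G); rewrite /defect gmul1 addrK.
rewrite -gpownM mulrA -natrM mulnC.
exact: hPh x (k.+1 * n.+1).-1.
Qed.

Lemma homogenization_inv x : Ph (ginv x) = - Ph x.
Proof.
apply: (homogenization_eq (C := D + D + D)) => n.
rewrite gpownV; set y := gpown x n.+1.
have := hPh x n; have := psi_defect (ginv y) y; have := psi_defect (gone G) (gone G).
rewrite /defect gmulV gmul1 => /ler_normlP[a1 a2] /ler_normlP[b1 b2] /ler_normlP[c1 c2].
by apply/ler_normlP; split; lra.
Qed.

Lemma homogenization_conj g x : Ph (g ** x ** ginv g) = Ph x.
Proof.
apply: (homogenization_eq (C := D + D + D + `|psi g + psi (ginv g)|)) => n.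
rewrite gpownJ; set y := gpown x n.+1.
have /ler_normlP[d1 d2] := lexx `|psi g + psi (ginv g)|.
have := hPh x n; have := psi_defect (g ** y) (ginv g); have := psi_defect g y.
rewrite /defect => /ler_normlP[a1 a2] /ler_normlP[b1 b2] /ler_normlP[c1 c2].
by apply/ler_normlP; split; lra.
Qed.

Lemma homogenization_defect x y : `|Ph (x ** y) - Ph x - Ph y| <= D + D + D + D.
Proof.
have near z : `|Ph z - psi z| <= D by have := hPh z 0%N; rewrite mul1r gpown1.
have := near x; have := near y; have := near (x ** y); have := psi_defect x y.
rewrite /defect => /ler_normlP[a1 a2] /ler_normlP[b1 b2] /ler_normlP[c1 c2] /ler_normlP[d1 d2].
by apply/ler_normlP; split; lra.
Qed.

Lemma homogenization_QInv (H : G -> Prop) : is_subgroup H -> QInv H Ph.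
Proof.
move=> hH; split.
- by exists (D + D + D + D) => x y _ _; exact: homogenization_defect.
- apply: homogeneous_on_of_gpown => // x *.
    exact: homogenization_gpown.
  exact: homogenization_inv.
- by move=> g x _; exact: homogenization_conj.
Qed.
End Homogenization.

Lemma bounded_inhom_cocycle_coboundary (Q : Grp) (w : Q -> Q -> R) :
  Hb_vanishes Q 1 -> (exists C, forall p q, `|w p q| <= C) -> inhom_cocycle w ->
  exists beta : Q -> R,
    (exists C, forall q, `|beta q| <= C) /\ forall p q, w p q = defect beta p q.
Proof.
move=> hQ [C hC] hw.
have w_bounded : bounded (homog2 w) by exists C => y; exact: hC.
have [B [B_inv [[CB hB] dB]]] :=
  hQ _ (invariant_homog2 w) w_bounded (fun y => cobound_homog2 y hw).
exists (fun q => B (pt [:: gone Q; q])); split; first by exists CB.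
move=> p q; rewrite -(cobound_invariant1_defect _ _ B_inv) -dB homog2_pt.
by rewrite invg1 gmul1 mulKg.
Qed.

Section QuasimorphismsOnNormalSubgroup.
Variables (F : Grp) (K M : F -> Prop) (psi : F -> R).
Hypotheses (hK : is_subgroup K) (hM : is_normal M) (hMK : forall x, M x -> K x).
Hypotheses (psi_Q : QInv K psi) (psi_hom : homomorphism_on M psi).

(* (k m)^n = k^n m_n with m_n in M and psi m_n = n psi m, so by homogeneity the
   defect of psi at (k^n, m_n) is n times its defect at (k, m). *)
Lemma QInv_mul_normal k m : K k -> M m -> psi (k ** m) = psi k + psi m.
Proof.
move=> Kk Mm; have [[D hD] psi_homog psi_conj] := psi_Q.
have [[M1 MM _] _] := hM; have [_ KM _] := hK.
have pow_split n : exists m',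
    [/\ M m', gpown (k ** m) n = gpown k n ** m' & psi m' = n%:R * psi m].
  elim: n => [|n [m' [Mm' e1 e2]]].
    by exists (gone F); rewrite gmul1 mul0r (hom_on1 hM.1 psi_hom).
  pose c := ginv (gpown k n) ** m ** gpown k n.
  have psi_c : psi c = psi m.
    by rewrite /c -{2}(invgK (gpown k n)) psi_conj //; exact: hMK.
  exists (c ** m'); split.
  - by apply: MM => //; exact: normal_conjV.
  - by rewrite !gpownS e1 /c -!gmulA mulKVg.
  - by rewrite psi_hom ?psi_c ?e2 ?mulrS ?mulrDl ?mul1r //; exact: normal_conjV.
apply/eqP; rewrite -subr_eq0; apply/eqP.
apply: (@eq0_of_bounded_multiples _ D) => n.
have [m' [Mm' e1 e2]] := pow_split n.+1.
have := hD (gpown k n.+1) m' (subgroup_gpown _ hK Kk) (hMK Mm').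
have Kkm : K (k ** m) := KM _ _ Kk (hMK Mm).
rewrite -e1 !(homogeneous_gpown _ psi_homog) // e2.
rewrite (_ : _ - _ - _ = n.+1%:R * (psi (k ** m) - (psi k + psi m))) ?normrM ?normr_nat //.
by ring.
Qed.

Lemma defect_mul_normal a b m m' : K a -> K b -> M m -> M m' ->
  defect psi (a ** m) (b ** m') = defect psi a b.
Proof.
move=> Ka Kb Mm Mm'; have [_ KM _] := hK; have [[_ MM _] _] := hM.
have [_ _ psi_conj] := psi_Q.
have Mc : M (ginv b ** m ** b) by exact: normal_conjV.
have psi_c : psi (ginv b ** m ** b) = psi m by rewrite -{2}(invgK b) psi_conj //; exact: hMK.
have e : a ** m ** (b ** m') = (a ** b) ** ((ginv b ** m ** b) ** m').
  by rewrite -!gmulA mulKVg.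
rewrite /defect e (QInv_mul_normal Ka Mm) (QInv_mul_normal Kb Mm').
by rewrite (QInv_mul_normal (KM _ _ Ka Kb) (MM _ _ Mc Mm')) (psi_hom Mc Mm') psi_c; ring.
Qed.

Variables (Q : Grp) (pi : F -> Q).
Hypotheses (hpi : is_quotient_in K M pi) (hQ : Hb_vanishes Q 1).

(* The defect of psi descends to a bounded inhomogeneous 2-cocycle w on K/M, which
   is the defect of a bounded beta since H_b^2(K/M) = 0; then psi - beta o pi is a
   homomorphism on K, so beta o pi is bounded and homogeneous, hence zero. *)
Lemma QInv_homomorphism_of_quotient : homomorphism_on K psi.
Proof.
have [pimul pisurj piker] := hpi; have [_ KM KV] := hK.
have [[D hD] psi_homog _] := psi_Q.
have [t ht] := choice _ pisurj.
have Kt q : K (t q) := (ht q).1; have pi_t q : pi (t q) = q := (ht q).2.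
have fibre a : K a -> M (ginv a ** t (pi a)).
  move=> Ka; have Kinv := KV _ Ka; have Kta := Kt (pi a).
  apply/(piker _ (KM _ _ Kinv Kta)).
  by rewrite pimul ?(morph_inV hK pimul) ?pi_t ?gmulV.
pose w p q := defect psi (t p) (t q).
have w_pi a b : K a -> K b -> w (pi a) (pi b) = defect psi a b.
  move=> Ka Kb.
  by rewrite -(defect_mul_normal Ka Kb (fibre a Ka) (fibre b Kb)) !mulKVg.
have w_bounded : exists C, forall p q, `|w p q| <= C.
  by exists D => p q; rewrite /w -normr_defect; exact: hD.
have w_cocycle : inhom_cocycle w.
  move=> p q r; have := defect_inhom_cocycle psi (t p) (t q) (t r).
  have pi_tt p' q' : pi (t p' ** t q') = p' ** q' by rewrite pimul ?pi_t.
  by rewrite -!w_pi ?pi_tt ?pi_t //; apply: KM.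
have [beta [[C hC] w_beta]] := bounded_inhom_cocycle_coboundary hQ w_bounded w_cocycle.
have chi_hom : homomorphism_on K (fun x => psi x - beta (pi x)).
  by move=> a b Ka Kb; have := w_pi a b Ka Kb; rewrite w_beta /defect pimul // => e; lra.
have beta_pi0 x : K x -> beta (pi x) = 0.
  move=> Kx; apply: (@eq0_of_bounded_multiples _ C) => n.
  have e : beta (pi (gpown x n.+1)) = n.+1%:R * beta (pi x).
    have : psi (gpown x n.+1) - beta (pi (gpown x n.+1)) = n.+1%:R * (psi x - beta (pi x)).
      exact (hom_on_gpown hK n.+1 chi_hom Kx).
    by rewrite (homogeneous_gpown _ psi_homog Kx); lra.
  by rewrite -normr_nat -normrM -e.
move=> a b Ka Kb; have Kab := KM _ _ Ka Kb; have := w_pi a b Ka Kb.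
by rewrite w_beta /defect -pimul // !beta_pi0 // => e; lra.
Qed.
End QuasimorphismsOnNormalSubgroup.

Section FactorSet.
Variables (F Q : Grp) (M : F -> Prop) (pi : F -> Q) (phi : F -> R) (D : R).
Hypotheses (hM : is_normal M) (pimul : forall x y, pi (x ** y) = pi x ** pi y)
           (pisurj : forall q, exists x, pi x = q) (piker : forall x, pi x = gone Q <-> M x).
Hypotheses (phi_defect : forall x y, M x -> M y -> `|defect phi x y| <= D)
           (phi_conj : conj_invariant_on M phi).
Variable s : Q -> F.
Hypotheses (pi_s : forall q, pi (s q) = q) (s1 : s (gone Q) = gone F).

Definition factor_set a b := s a ** s b ** ginv (s (a ** b)).

Definition phi_ext x := phi (x ** ginv (s (pi x))).

Definition factor_cochain : cochain Q 2 := homog2 (fun a b => phi (factor_set a b)).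

Definition corrected_defect : cochain F 2 :=
  fun y => cobound (homog1 phi_ext) y + pullback pi factor_cochain y.

Lemma M_factor_set a b : M (factor_set a b).
Proof. by apply/piker; rewrite /factor_set !pimul (morphV pimul) !pi_s mulgV. Qed.

Lemma M_mul_section x : M (x ** ginv (s (pi x))).
Proof. by apply/piker; rewrite pimul (morphV pimul) pi_s mulgV. Qed.

Lemma phi_ext_M m : M m -> phi_ext m = phi m.
Proof. by move=> /piker pim; rewrite /phi_ext pim s1 invg1 mulg1. Qed.

(* x y s(pi (x y))^-1 = m (n' z) where m = x s(pi x)^-1, n' is a conjugate of
   y s(pi y)^-1 and z is the factor set, all three in M. *)
Lemma defect_phi_ext x y :
  `|defect phi_ext x y + phi (factor_set (pi x) (pi y))| <= D + D.
Proof.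
have [[_ MM _] Mconj] := hM.
set a := pi x; set b := pi y; set z := factor_set a b.
pose m := x ** ginv (s a); pose n := y ** ginv (s b).
pose n' := s a ** n ** ginv (s a).
have Mm : M m := M_mul_section x; have Mn : M n := M_mul_section y.
have Mn' : M n' by exact: Mconj.
have e : (x ** y) ** ginv (s (pi (x ** y))) = m ** (n' ** z).
  by rewrite pimul -/a -/b /m /n' /n /z /factor_set -!gmulA !mulKg.
have -> : defect phi_ext x y + phi z = defect phi m (n' ** z) + defect phi n' z.
  by rewrite /defect /phi_ext e phi_conj // -/a -/b -/m -/n; ring.
apply: le_trans (ler_normD _ _) (lerD _ _); apply: phi_defect => //.
- exact: MM Mn' (M_factor_set a b).
- exact: M_factor_set.
Qed.

Lemma corrected_defect_pt a b c : corrected_defect (pt [:: a; b; c]) =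
  defect phi_ext (ginv a ** b) (ginv b ** c)
  + phi (factor_set (pi (ginv a ** b)) (pi (ginv b ** c))).
Proof.
by rewrite /corrected_defect cobound_homog1 /factor_cochain (pullback_homog2 pimul) homog2_pt.
Qed.

Lemma bounded_corrected_defect : bounded corrected_defect.
Proof.
exists (D + D) => y; rewrite (pt_eta y) /= corrected_defect_pt.
exact: defect_phi_ext.
Qed.

Lemma bounded_cobound_factor_cochain : bounded (cobound factor_cochain).
Proof.
apply: (bounded_of_pullback pisurj).
rewrite -cobound_pullback.
have -> : pullback pi factor_cochain =
          fun y => corrected_defect y - cobound (homog1 phi_ext) y.
  by apply: functional_extensionality => y; rewrite /corrected_defect; ring.
have -> : cobound (fun y => corrected_defect y - cobound (homog1 phi_ext) y) =
          cobound corrected_defect.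
  by apply: functional_extensionality => y; rewrite coboundB cobound_cobound1 subr0.
exact: bounded_cobound bounded_corrected_defect.
Qed.

Lemma exists_quasimorphism_extension : H_vanishes F 1 -> Hb_vanishes Q 2 ->
  exists (Psi : F -> R) (C kap : R), (forall a b, `|defect Psi a b| <= C) /\
    forall a b, M a -> M b -> defect Psi a b = defect phi a b + kap.
Proof.
move=> hF hQ; have [[M1 MM _] _] := hM.
have [B [B_inv [B_bounded dB]]] := hQ _
  (invariant_cobound (invariant_homog2 _)) bounded_cobound_factor_cochain
  (cobound_cobound2 factor_cochain).
pose c y := corrected_defect y - pullback pi B y.
have c_inv : Defs.invariant c.
  move=> g y; rewrite /c /corrected_defect (invariant_pullback pimul B_inv).
  rewrite (invariant_cobound (invariant_homog1 _)).
  by rewrite (invariant_pullback pimul (invariant_homog2 _)).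
have [C hC] : bounded c.
  have [[C1 hC1] [C2 hC2]] := (bounded_corrected_defect, B_bounded).
  by exists (C1 + C2) => y; apply: le_trans (ler_normB _ _) (lerD (hC1 y) (hC2 _)).
have c_cocycle y : cobound c y = 0.
  rewrite coboundB coboundD cobound_cobound1 add0r !cobound_pullback /pullback.
  by rewrite dB subrr.
have [h [h_inv c_h]] := hF c c_inv c_cocycle.
exists (fun x => h (pt [:: gone F; x])), C.
exists (phi (factor_set (gone Q) (gone Q)) - B (pt [:: gone Q; gone Q; gone Q])).
split=> a b; rewrite -(cobound_invariant1_defect _ _ h_inv) -c_h; first exact: hC.
move=> Ma Mb; have Mab := MM _ _ Ma Mb.
rewrite /c corrected_defect_pt (pullback_pt _ _ (morph1 pimul)) /=.
by rewrite invg1 gmul1 mulKg !(piker _).2 // /defect !phi_ext_M //; ring.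
Qed.
End FactorSet.

(* Psi - phi - kap is a homomorphism on M, so the homogenization of Psi differs
   from phi on M by a homomorphism. *)
Lemma W_decomposition (F : Grp) (K M : F -> Prop) (phi Psi : F -> R) (C kap : R) :
  is_subgroup K -> is_normal M -> QInv M phi ->
  (forall a b, `|defect Psi a b| <= C) ->
  (forall a b, M a -> M b -> defect Psi a b = defect phi a b + kap) ->
  exists h psi, [/\ H1Inv M h, QInv K psi & forall x, M x -> phi x = h x + psi x].
Proof.
move=> hK hM [_ phi_homog phi_conj] Psi_defect Psi_phi.
have [[_ MM _] _] := hM.
have [Ph hPh] := exists_homogenization Psi_defect.
pose chi x := Psi x - phi x - kap.
have chi_hom : homomorphism_on M chi.
  by move=> a b Ma Mb; have := Psi_phi a b Ma Mb; rewrite /chi /defect => e; lra.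
have Ph_M m : M m -> Ph m = phi m + chi m.
  move=> Mm; apply: (homogenization_eq hPh (C := `|kap|)) => n.
  rewrite [Psi _](_ : _ = phi (gpown m n.+1) + chi (gpown m n.+1) + kap); last first.
    by rewrite /chi; ring.
  rewrite (homogeneous_gpown _ phi_homog Mm) (hom_on_gpown hM.1 _ chi_hom Mm).
  by rewrite (_ : _ - _ = - kap) ?normrN //; ring.
exists (fun x => phi x - Ph x), Ph; split=> [||x _]; last by ring.
- split=> [a b Ma Mb | g x Mx].
  + have Mab := MM _ _ Ma Mb.
    by rewrite !Ph_M // (chi_hom a b Ma Mb); ring.
  + by rewrite (homogenization_conj Psi_defect hPh) phi_conj.
- exact: homogenization_QInv.
Qed.

Lemma W_trivial_of_acyclic (F Q : Grp) (K M : F -> Prop) (pi : F -> Q) :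
  is_subgroup K -> is_normal M -> is_quotient M pi ->
  H_vanishes F 1 -> Hb_vanishes Q 2 -> W_trivial K M.
Proof.
move=> hK hM [pimul pisurj piker] hF hQ phi phi_Q.
have [[D phi_qm] _ phi_conj] := phi_Q.
have [s [pi_s s1]] := normalized_section (gone F) pisurj.
rewrite (morph1 pimul) in s1.
have phi_defect x y : M x -> M y -> `|defect phi x y| <= D.
  by move=> Mx My; rewrite -normr_defect; exact: phi_qm.
have [Psi [C [kap [Psi_C Psi_phi]]]] :=
  exists_quasimorphism_extension hM pimul pisurj piker phi_defect phi_conj pi_s s1 hF hQ.
exact: W_decomposition hK hM phi_Q Psi_C Psi_phi.
Qed.

Unset Implicit Arguments.
Theorem proposition7p5 (F : Grp) (K M : F -> Prop)
  (hK : is_normal K) (hM : is_normal M) (hMK : forall x, M x -> K x)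
  (h1 : H_vanishes F 1)
  (FM : Grp) (piFM : F -> FM) (hFM : is_quotient M piFM)
  (h2 : bdd_acyclic FM 3)
  (KM : Grp) (piKM : F -> KM) (hKM : is_quotient_in K M piKM)
  (h3 : bdd_acyclic KM 2) :
  W_trivial K M /\
  (forall f : F -> R,
     (H1Inv M f /\ exists psi, QInv K psi /\ forall x, M x -> f x = psi x) <->
     (exists h, H1Inv K h /\ forall x, M x -> f x = h x)).
Proof.
split; first exact: W_trivial_of_acyclic hK.1 hM hFM h1 (h2 2%N isT).
move=> f; split.
- case=> -[f_hom _] [psi [psi_Q f_psi]]; exists psi; split=> //; split; last by case: psi_Q.
  apply: (QInv_homomorphism_of_quotient hK.1 hM hMK psi_Q _ hKM (h3 1%N isT)).
  exact: (@homomorphism_on_eq _ _ hM.1 psi f (fun x Mx => esym (f_psi x Mx)) f_hom).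
- case=> h [h_H1 f_h]; split; first exact: H1Inv_eq_on hM f_h (H1Inv_sub hMK h_H1).
  by exists h; split=> //; apply: H1Inv_QInv h_H1; case: hK.
Qed.
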